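(* Let $E_0,E_1,E_2\in\mathcal G$ be mutually distant, and let $W\in\mathcal G$ be adjacent to $E_0$ and not distant from $E_1$ nor from $E_2$. For $i\in\{1,2\}$ let $p_i:=E_i\cap W$, which is a point. Then the line $L=p_1+p_2$ meets $E_0$; that is, $L$ is the unique line through $p_1$ meeting $E_0$ and $E_2$.
   Context: $K$ is a (not necessarily commutative) field and $V$ is a left vector space over $K$ of arbitrary (possibly infinite) dimension with $\dim V>2$. $\mathcal G:=\{X\le V\mid X\cong V/X\}$, assumed nonempty. Points are $1$-dimensional and lines $2$-dimensional subspaces; two subspaces meet if they have a common point. $X,Y\in\mathcal G$ are adjacent if $\dim((X+Y)/X)=\dim((X+Y)/Y)=1$, and distant if $V=X\oplus Y$. *)

From HB Require Import structures.
From mathcomp Require Import all_boot all_algebra.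
Set Implicit Arguments. Unset Strict Implicit. Unset Printing Implicit Defensive.
Import GRing.Theory.
Local Open Scope ring_scope.

Definition divring (K : unitRingType) : Prop :=
  forall x : K, x != 0 -> x \is a GRing.unit.

Section Geom.
Variables (K : unitRingType) (V : lmodType K).

Definition subspace (X : V -> Prop) : Prop :=
  X 0 /\ forall (a : K) (u v : V), X u -> X v -> X (a *: u + v).

Definition incl (X Y : V -> Prop) : Prop := forall v, X v -> Y v.
Definition seteq (X Y : V -> Prop) : Prop := forall v, X v <-> Y v.
Definition cap (X Y : V -> Prop) : V -> Prop := fun v => X v /\ Y v.
Definition ssum (X Y : V -> Prop) : V -> Prop :=
  fun v => exists x y, X x /\ Y y /\ v = x + y.

Definition lin (f : V -> V) : Prop :=
  forall (a : K) (u v : V), f (a *: u + v) = a *: f u + f v.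

(* X ≅ V/X : a linear isomorphism V/X -> X is the same as a linear
   surjection V -> X whose kernel is exactly X (first isomorphism theorem). *)
Definition iso_quot (X : V -> Prop) : Prop :=
  exists f : V -> V, lin f /\
    (forall v, X (f v)) /\ (forall x, X x -> exists v, f v = x) /\
    (forall v, f v = 0 <-> X v).

Definition inG (X : V -> Prop) : Prop := subspace X /\ iso_quot X.

Definition dim_gt2 : Prop :=
  exists u v w : V, forall a b c : K,
    a *: u + b *: v + c *: w = 0 -> [/\ a = 0, b = 0 & c = 0].

Definition is_point (P : V -> Prop) : Prop :=
  exists v : V, v != 0 /\ forall u, P u <-> exists a : K, u = a *: v.

Definition is_line (L : V -> Prop) : Prop :=
  exists v w : V, (forall a b : K, a *: v + b *: w = 0 -> a = 0 /\ b = 0) /\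
    forall u, L u <-> exists a b : K, u = a *: v + b *: w.

Definition meets (X Y : V -> Prop) : Prop :=
  exists P, is_point P /\ incl P X /\ incl P Y.

Definition quot_dim1 (Z X : V -> Prop) : Prop :=
  exists v, Z v /\ ~ X v /\
    forall z, Z z -> exists x (a : K), X x /\ z = x + a *: v.

Definition adjacent (X Y : V -> Prop) : Prop :=
  quot_dim1 (ssum X Y) X /\ quot_dim1 (ssum X Y) Y.

Definition distant (X Y : V -> Prop) : Prop :=
  (forall v, ssum X Y v) /\ (forall v, X v -> Y v -> v = 0).

End Geom.

From mathcomp Require Import all_boot all_algebra.
From Stdlib Require Import Classical.
Set Implicit Arguments. Unset Strict Implicit. Unset Printing Implicit Defensive.
Import GRing.Theory.
Local Open Scope ring_scope.

(* The point p1 = E1 ∩ W is nonzero: otherwise W ∩ E1 = 0, and since E0 lies in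
   W + K e' for some e' ∈ E0 while W ⊄ E0, one finds e' ∈ W + E1, whence
   W ⊕ E1 = E0 + E1 = V. It is at most a point because it injects into
   (W + E0)/E0, which is one-dimensional. Writing p_i = K v_i, adjacency gives
   v2 ≡ k v1 modulo E0, so z := v2 - k v1 is a common point of L and E0.
   A line M through p1 meeting E0 in c0 and E2 in c2 is spanned by c0, c2;
   from v1 = x c0 + y c2 the E0 ⊕ E2 decomposition of v2 - k y c2 forces
   v2 = k y c2 ∈ M, hence M = L. *)

Section Subspaces.
Variables (K : unitRingType) (V : lmodType K).

Definition span1 (v : V) : V -> Prop := fun u => exists a : K, u = a *: v.

Definition span2 (v w : V) : V -> Prop :=
  fun u => exists a b : K, u = a *: v + b *: w.

Definition indep2 (v w : V) : Prop :=
  forall a b : K, a *: v + b *: w = 0 -> a = 0 /\ b = 0.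

Section OneSubspace.
Variable X : V -> Prop.
Hypothesis sX : subspace X.

Lemma subspace0 : X 0. Proof. exact: sX.1. Qed.

Lemma subspaceZ a u : X u -> X (a *: u).
Proof. by move=> Xu; have := sX.2 a u 0 Xu subspace0; rewrite addr0. Qed.

Lemma subspaceD u v : X u -> X v -> X (u + v).
Proof. by move=> Xu Xv; have := sX.2 1 u v Xu Xv; rewrite scale1r. Qed.

Lemma subspaceN u : X u -> X (- u).
Proof. by rewrite -scaleN1r; apply: subspaceZ. Qed.

Lemma subspaceB u v : X u -> X v -> X (u - v).
Proof. by move=> Xu Xv; apply/subspaceD/subspaceN. Qed.

Lemma span1_min v : X v -> incl (span1 v) X.
Proof. by move=> Xv u [a ->]; apply: subspaceZ. Qed.

Lemma span2_min v w : X v -> X w -> incl (span2 v w) X.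
Proof. by move=> Xv Xw u [a [b ->]]; apply/subspaceD; apply: subspaceZ. Qed.

Lemma seteq_subspace (Y : V -> Prop) : seteq Y X -> subspace Y.
Proof.
move=> eqYX; split; first by apply/(eqYX 0); apply: subspace0.
by move=> a u v /eqYX Xu /eqYX Xv; apply/eqYX; apply: sX.2.
Qed.

End OneSubspace.

Lemma ssum_subspace (X Y : V -> Prop) :
  subspace X -> subspace Y -> subspace (ssum X Y).
Proof.
move=> sX sY; split.
  by exists 0, 0; rewrite addr0; split; [exact: subspace0 sX | split; [exact: subspace0 sY |]].
move=> a u v [x [y [Xx [Yy ->]]]] [x' [y' [Xx' [Yy' ->]]]].
exists (a *: x + x'), (a *: y + y'); split; first exact: sX.2.
by split; [exact: sY.2 | rewrite scalerDr addrACA].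
Qed.

Lemma ssuml (X Y : V -> Prop) x : subspace Y -> X x -> ssum X Y x.
Proof. by move=> sY Xx; exists x, 0; rewrite addr0; do 2 split=> //; apply: subspace0. Qed.

Lemma ssumr (X Y : V -> Prop) y : subspace X -> Y y -> ssum X Y y.
Proof. by move=> sX Yy; exists 0, y; rewrite add0r; split=> //; apply: subspace0. Qed.

Lemma span1_self v : span1 v v.
Proof. by exists 1; rewrite scale1r. Qed.

Lemma span2_subspace v w : subspace (span2 v w).
Proof.
split; first by exists 0, 0; rewrite !scale0r addr0.
move=> a u u' [x [y ->]] [x' [y' ->]]; exists (a * x + x'), (a * y + y').
by rewrite scalerDr !scalerA !scalerDl addrACA.
Qed.

Lemma span2_l v w : span2 v w v.
Proof. by exists 1, 0; rewrite scale1r scale0r addr0. Qed.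

Lemma span2_r v w : span2 v w w.
Proof. by exists 0, 1; rewrite scale1r scale0r add0r. Qed.

Lemma span2C v w u : span2 v w u -> span2 w v u.
Proof. by move=> [a [b ->]]; exists b, a; rewrite addrC. Qed.

Lemma ssum_span1 (P Q : V -> Prop) v w :
  seteq P (span1 v) -> seteq Q (span1 w) -> seteq (ssum P Q) (span2 v w).
Proof.
move=> PE QE u; split=> [[x [y [/PE [a ->] [/QE [b ->] ->]]]] | [a [b ->]]].
  by exists a, b.
by exists (a *: v), (b *: w); split; [apply/PE; exists a | split=> //; apply/QE; exists b].
Qed.

Lemma indep2_subr_neq0 v w (k : K) : indep2 v w -> w - k *: v != 0.
Proof.
move=> ind; apply/eqP => z0.
have /ind [_ /eqP] : (- k) *: v + 1 *: w = 0 by rewrite scale1r scaleNr addrC.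
by rewrite oner_eq0.
Qed.

Lemma meets_span1 (X Y : V -> Prop) z :
  subspace X -> subspace Y -> X z -> Y z -> z != 0 -> meets X Y.
Proof.
move=> sX sY Xz Yz nz; exists (span1 z).
by split; [exists z | split; apply: span1_min].
Qed.

Lemma meets_witness (X Y : V -> Prop) : meets X Y -> exists c, [/\ c != 0, X c & Y c].
Proof.
move=> [P [[c [nc HP]] [PX PY]]]; have Pc : P c by apply/HP/span1_self.
by exists c; split; [| apply: PX | apply: PY].
Qed.

Section DivisionRing.
Hypothesis HK : divring K.

Lemma divring_mulVr (a : K) : a != 0 -> a^-1 * a = 1.
Proof. by move=> a0; apply/mulVr/HK. Qed.

Lemma scalerK_div (a : K) :
  a != 0 -> cancel ( *:%R a : V -> V) ( *:%R a^-1 : V -> V).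
Proof. by move=> a0 v; rewrite scalerA divring_mulVr // scale1r. Qed.

Lemma scaler_eq0_div (a : K) (v : V) : v != 0 -> a *: v = 0 -> a = 0.
Proof.
move=> nv av0; apply/eqP; apply: contraNT nv => a0.
by rewrite -(scalerK_div a0 v) av0 scaler0.
Qed.

Lemma subspaceZK (X : V -> Prop) (a : K) (v : V) :
  subspace X -> a != 0 -> X (a *: v) -> X v.
Proof. by move=> sX a0 Xav; rewrite -(scalerK_div a0 v); apply: subspaceZ. Qed.

Lemma indep2_cap0 (X Y : V -> Prop) v w :
  subspace X -> subspace Y -> (forall u, X u -> Y u -> u = 0) ->
  X v -> Y w -> v != 0 -> w != 0 -> indep2 v w.
Proof.
move=> sX sY XY0 Xv Yw nv nw a b Eab.
have av0 : a *: v = 0.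
  apply: XY0; first exact: subspaceZ.
  by rewrite -[a *: v]opprK (addr0_eq Eab); apply/(subspaceN sY)/(subspaceZ sY).
have a0 := scaler_eq0_div nv av0; split=> //.
by apply: (scaler_eq0_div nw); rewrite -Eab a0 scale0r add0r.
Qed.

Lemma span2_exchange c d m1 m2 (a b : K) :
  indep2 c d -> c = a *: m1 + b *: m2 -> a != 0 -> span2 m1 m2 d ->
  incl (span2 m1 m2) (span2 c d).
Proof.
move=> ind Ec a0 [a' [b' Ed]]; have S := span2_subspace c d.
pose k := a' * a^-1.
have Edc : d - k *: c = (b' - k * b) *: m2.
  rewrite Ec Ed scalerDr !scalerA /k -mulrA divring_mulVr // mulr1.
  by rewrite scalerBl opprD addrACA subrr add0r.
have b0 : b' - k * b != 0.
  by apply/eqP => b0; move/eqP: (indep2_subr_neq0 k ind); apply; rewrite Edc b0 scale0r.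
have Sm2 : span2 c d m2.
  apply: (subspaceZK S b0); rewrite -Edc.
  by apply: subspaceB S _ _ (span2_r c d) (subspaceZ S _ (span2_l c d)).
have Sm1 : span2 c d m1.
  apply: (subspaceZK S a0); have -> : a *: m1 = c - b *: m2 by rewrite Ec addrK.
  by apply: subspaceB S _ _ (span2_l c d) (subspaceZ S _ Sm2).
exact (span2_min S Sm1 Sm2).
Qed.

Lemma incl_span2_indep c d m1 m2 :
  indep2 c d -> span2 m1 m2 c -> span2 m1 m2 d -> incl (span2 m1 m2) (span2 c d).
Proof.
move=> ind [a [b Ec]] Hd.
have [a0 | an0] := eqVneq a 0; last exact: span2_exchange ind Ec an0 Hd.
have bn0 : b != 0.
  apply/eqP => b0; have /ind [/eqP] : 1 *: c + 0 *: d = 0.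
    by rewrite Ec a0 b0 !scale0r !addr0 scaler0.
  by rewrite oner_eq0.
have Ec' : c = b *: m2 + a *: m1 by rewrite Ec addrC.
by move=> u /span2C; apply: (span2_exchange ind Ec' bn0 (span2C Hd)).
Qed.

Lemma quot_dim1_proportional (Z Y : V -> Prop) x x1 :
  subspace Y -> quot_dim1 Z Y -> Z x -> Z x1 -> ~ Y x1 ->
  exists c : K, Y (x - c *: x1).
Proof.
move=> sY [v [_ [_ HZ]]] Zx Zx1 nYx1.
have [y [a [Yy ->]]] := HZ x Zx; have [y1 [a1 [Yy1 Ex1]]] := HZ x1 Zx1.
have a1n : a1 != 0 by apply/eqP => a10; apply: nYx1; rewrite Ex1 a10 scale0r addr0.
exists (a * a1^-1); rewrite Ex1 scalerDr scalerA -mulrA divring_mulVr // mulr1.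
rewrite opprD addrACA subrr addr0.
by apply: (subspaceB sY) => //; apply: subspaceZ.
Qed.

Lemma distant_of_cap0 (W E0 E1 : V -> Prop) :
  subspace W -> subspace E0 -> subspace E1 -> distant E0 E1 -> adjacent W E0 ->
  (forall u, W u -> E1 u -> u = 0) -> distant W E1.
Proof.
move=> sW s0 s1 [cover01 _] [[u [[w' [e' [Ww' [E0e' Eu]]]] [_ Hu]]] [v0 [Sv0 [nE0v0 _]]]].
move=> WE1_0.
split=> //; have S := ssum_subspace sW s1.
have E0_sub : forall e, E0 e -> exists w (c : K), W w /\ e = w + c *: e'.
  move=> e E0e; have [x [c [Wx ->]]] := Hu e (ssumr sW E0e).
  exists (x + c *: w'), c; split; first by apply: (subspaceD sW) => //; apply: subspaceZ.
  by rewrite Eu scalerDr addrA.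
have [w0 [e0 [Ww0 [E0e0 Ev0]]]] := Sv0.
have nE0w0 : ~ E0 w0 by move=> E0w0; apply: nE0v0; rewrite Ev0; apply: subspaceD.
have [f0 [f1 [E0f0 [E1f1 Ew0]]]] := cover01 w0.
have [w [b [Ww Ef0]]] := E0_sub f0 E0f0.
have bn0 : b != 0.
  apply/eqP => b0; apply: nE0w0; rewrite Ew0 (WE1_0 f1) ?addr0 //.
  have -> : f1 = w0 - w by rewrite Ew0 Ef0 b0 scale0r !addr0 addrC addKr.
  exact: subspaceB.
have Se' : ssum W E1 e'.
  apply: (subspaceZK S bn0).
  have -> : b *: e' = w0 - f1 - w by rewrite Ew0 Ef0 addrK addrC addKr.
  by apply: (subspaceB S); [apply: (subspaceB S) | ]; [apply: ssuml | apply: ssumr | apply: ssuml].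
move=> v; have [g0 [g1 [E0g0 [E1g1 ->]]]] := cover01 v.
have [x [c [Wx ->]]] := E0_sub g0 E0g0.
apply: (subspaceD S); last exact: ssumr.
by apply: (subspaceD S); [apply: ssuml | apply: subspaceZ].
Qed.

Lemma cap_is_point (W E0 E1 : V -> Prop) :
  subspace W -> subspace E0 -> subspace E1 -> distant E0 E1 -> adjacent W E0 ->
  ~ distant W E1 -> is_point (cap E1 W).
Proof.
move=> sW s0 s1 d01 adj nd.
have [v1 [[E1v1 Wv1] nz1]] : exists v1, cap E1 W v1 /\ v1 != 0.
  apply: NNPP => no; apply/nd/(distant_of_cap0 sW s0 s1 d01 adj) => v Wv E1v.
  by have [// | nzv] := eqVneq v 0; case: no; exists v.
have nE0v1 : ~ E0 v1 by move=> E0v1; move/eqP: nz1; apply; apply: d01.2.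
exists v1; split=> // x; split=> [[E1x Wx] | ]; last first.
  by move=> [a ->]; split; apply: subspaceZ.
have [c E0xv1] := quot_dim1_proportional s0 adj.2 (ssuml s0 Wx) (ssuml s0 Wv1) nE0v1.
exists c; apply/subr0_eq/d01.2 => //.
by apply: (subspaceB s1) => //; apply: subspaceZ.
Qed.

Lemma meeting_line_unique (E0 E2 M : V -> Prop) v1 v2 (k : K) :
  subspace E0 -> subspace E2 -> (forall u, E0 u -> E2 u -> u = 0) ->
  indep2 v1 v2 -> E2 v2 -> E0 (v2 - k *: v1) ->
  is_line M -> M v1 -> meets M E0 -> meets M E2 -> seteq M (span2 v1 v2).
Proof.
move=> s0 s2 E02_0 ind12 E2v2 E0z [m1 [m2 [_ eqM]]] Mv1.
move=> /meets_witness [c0 [nc0 Mc0 E0c0]] /meets_witness [c2 [nc2 Mc2 E2c2]].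
have sM : subspace M := seteq_subspace (span2_subspace m1 m2) eqM.
have ind02 := indep2_cap0 s0 s2 E02_0 E0c0 E2c2 nc0 nc2.
have [x [y Ev1]] : span2 c0 c2 v1.
  exact: (incl_span2_indep ind02 ((eqM _).1 Mc0) ((eqM _).1 Mc2) ((eqM _).1 Mv1)).
have Ev2 : v2 = (k * y) *: c2.
  apply/subr0_eq/E02_0; last by apply: (subspaceB s2) => //; apply: subspaceZ.
  have -> : v2 - (k * y) *: c2 = (v2 - k *: v1) + (k * x) *: c0.
    by rewrite Ev1 scalerDr !scalerA opprD addrA addrAC subrK.
  by apply: (subspaceD s0) => //; apply: subspaceZ.
have Mv2 : M v2 by rewrite Ev2; apply: subspaceZ.
move=> u; split=> [/eqM | ]; last exact: (span2_min sM Mv1 Mv2).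
exact: (incl_span2_indep ind12 ((eqM _).1 Mv1) ((eqM _).1 Mv2)).
Qed.

End DivisionRing.
End Subspaces.

Theorem lemma4p9 (K : unitRingType) (HK : divring K) (V : lmodType K)
  (Hdim : dim_gt2 V) (E0 E1 E2 W : V -> Prop) :
  inG E0 -> inG E1 -> inG E2 -> inG W ->
  distant E0 E1 -> distant E0 E2 -> distant E1 E2 ->
  adjacent W E0 -> ~ distant W E1 -> ~ distant W E2 ->
  is_point (cap E1 W) /\ is_point (cap E2 W) /\
  is_line (ssum (cap E1 W) (cap E2 W)) /\
  meets (ssum (cap E1 W) (cap E2 W)) E0 /\
  (forall M : V -> Prop, is_line M -> incl (cap E1 W) M ->
     meets M E0 -> meets M E2 -> seteq M (ssum (cap E1 W) (cap E2 W))).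
Proof.
move=> [s0 _] [s1 _] [s2 _] [sW _] d01 d02 d12 adj nd1 nd2.
have P1 := cap_is_point HK sW s0 s1 d01 adj nd1.
have P2 := cap_is_point HK sW s0 s2 d02 adj nd2.
have [v1 [nz1 eqP1]] := P1; have [v2 [nz2 eqP2]] := P2.
have [E1v1 Wv1] : cap E1 W v1 by apply/eqP1/span1_self.
have [E2v2 Wv2] : cap E2 W v2 by apply/eqP2/span1_self.
have eqL := ssum_span1 eqP1 eqP2.
have ind12 := indep2_cap0 HK s1 s2 d12.2 E1v1 E2v2 nz1 nz2.
have nE0v1 : ~ E0 v1 by move=> E0v1; move/eqP: nz1; apply; apply: d01.2.
have [k E0z] := quot_dim1_proportional HK s0 adj.2 (ssuml s0 Wv2) (ssuml s0 Wv1) nE0v1.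
do 3 (split=> //); first by exists v1, v2.
split.
  have sL := seteq_subspace (span2_subspace v1 v2) eqL.
  apply: (meets_span1 sL s0 _ E0z (indep2_subr_neq0 k ind12)).
  by apply/eqL; exists (- k), 1; rewrite scale1r scaleNr addrC.
move=> M lineM incl1 mE0 mE2 u; have Mv1 : M v1 by apply: incl1.
by rewrite (meeting_line_unique HK s0 s2 d02.2 ind12 E2v2 E0z lineM Mv1 mE0 mE2) eqL.
Qed.
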